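(* Let $s=s_1+is_2$ with $s_1>0$, $s_2\in\mathbb R$ (the same $s_1$ as in $\alpha,\beta$). Then for all $x\in\Gamma_\rho$ and $y\in\Gamma_R$, $$|\rho_s(\widetilde x,y)/s|\ge d,\qquad \operatorname{Re}[\rho_s(\widetilde x,y)]\ge\rho\,\hat\sigma(\rho)=\frac{\sigma_0 d}{m+1}.$$
   Context: Let $0<R<\rho$, $d=\rho-R$, $\Gamma_r=\{|x|=r\}$. Fix $s_1>0$, $\sigma_0>0$ and an integer $m\ge1$; let $\sigma(r)=0$ for $0\le r\le R$, $\sigma(r)=\sigma_0((r-R)/(\rho-R))^m$ for $R\le r\le\rho$, $\sigma(r)=\sigma_0$ for $r\ge\rho$; $\alpha(r)=1+s_1^{-1}\sigma(r)$; $\beta(r)=\frac1r\int_0^r\alpha(\tau)d\tau=1+s_1^{-1}\hat\sigma(r)$, with $\hat\sigma(r)=\frac1r\int_R^r\sigma(\tau)d\tau$ for $r\ge R$. The real stretched coordinates of $x\in\mathbb R^3$ are $\widetilde x=\beta(|x|)\,x$ (so $|\widetilde x|=\int_0^{|x|}\alpha$ and $\widetilde x$ has the same angular coordinates as $x$). The complex distance is $\rho_s(\widetilde x,y)=\big[s^2|\widetilde x-y|^2\big]^{1/2}$, where $z^{1/2}$ is the branch analytic on $\mathbb C\setminus(-\infty,0]$ with positive real part. *)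

From Stdlib Require Import Reals Lra ClassicalEpsilon.
Open Scope R_scope.

(* Riemann integral of f over [a,b] (Stdlib RiemannInt), with an arbitrary
   integrability certificate chosen classically; 0 if f is not integrable.
   (RiemannInt does not depend on the certificate: RiemannInt_P5.) *)
Definition Rint (f : R -> R) (a b : R) : R :=
  match excluded_middle_informative (exists _ : Riemann_integrable f a b, True) with
  | left H => RiemannInt (proj1_sig (constructive_indefinite_description _ H))
  | right _ => 0
  end.

(* Absorbing-layer profile sigma, with parameters R0 (= R), rho, sigma0, m. *)
Definition sigma (R0 rho sigma0 : R) (m : nat) (r : R) : R :=
  if Rle_dec r R0 then 0
  else if Rle_dec r rho then sigma0 * ((r - R0) / (rho - R0)) ^ m
  else sigma0.

Definition alpha (R0 rho sigma0 s1 : R) (m : nat) (r : R) : R :=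
  1 + / s1 * sigma R0 rho sigma0 m r.

Definition beta (R0 rho sigma0 s1 : R) (m : nat) (r : R) : R :=
  / r * Rint (alpha R0 rho sigma0 s1 m) 0 r.

Definition sigma_hat (R0 rho sigma0 : R) (m : nat) (r : R) : R :=
  / r * Rint (sigma R0 rho sigma0 m) R0 r.

Definition vec3 : Type := (R * R * R)%type.
Definition vnorm (x : vec3) : R :=
  let '(a, b, c) := x in sqrt (a * a + b * b + c * c).
Definition vscale (t : R) (x : vec3) : vec3 :=
  let '(a, b, c) := x in (t * a, t * b, t * c).
Definition vsub (x y : vec3) : vec3 :=
  let '(a, b, c) := x in let '(a', b', c') := y in (a - a', b - b', c - c').

Definition stretch (R0 rho sigma0 s1 : R) (m : nat) (x : vec3) : vec3 :=
  vscale (beta R0 rho sigma0 s1 m (vnorm x)) x.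

Definition C : Type := (R * R)%type.
Definition Re (z : C) : R := fst z.
Definition Im (z : C) : R := snd z.
Definition Cmul (z w : C) : C :=
  (fst z * fst w - snd z * snd w, fst z * snd w + snd z * fst w).
Definition Cabs (z : C) : R := sqrt (fst z * fst z + snd z * snd z).
Definition Cinv (z : C) : C :=
  let n := fst z * fst z + snd z * snd z in (fst z / n, - snd z / n).
Definition Cdiv (z w : C) : C := Cmul z (Cinv w).
Definition RtoC (t : R) : C := (t, 0).

(* Principal square root: analytic on C \ (-oo,0], positive real part there. *)
Definition Csqrt (z : C) : C :=
  let a := fst z in let b := snd z in
  (sqrt ((Cabs z + a) / 2),
   (if Rlt_dec b 0 then -1 else 1) * sqrt ((Cabs z - a) / 2)).

Definition rho_s (R0 rho sigma0 s1 : R) (m : nat) (s : C) (x y : vec3) : C :=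
  let t := vnorm (vsub (stretch R0 rho sigma0 s1 m x) y) in
  Csqrt (Cmul (Cmul s s) (RtoC (t * t))).

From Pilot Require Import Defs.
From Stdlib Require Import Reals Lra Psatz ClassicalEpsilon.
From Coquelicot Require Import Coquelicot.
(* Coquelicot also defines [sigma] and [C]; re-import the definitions of the
   statement so that they take precedence. *)
Import Defs.
Open Scope R_scope.

(* Write d = rho - R and K = sigma0 d / (m+1).  The argument has three parts.
   1. Integrals of the profile: sigma vanishes on [0,R] and is the monomial
      sigma0 ((r-R)/d)^m on [R,rho], so  int_R^rho sigma = K, whence
      rho * sigma_hat(rho) = K  and  rho * beta(rho) = rho + K/s1.
   2. Geometry: for |x| = rho and |y| = R the stretched point has norm
      beta(rho) rho, so the reverse triangle inequality gives
      t := |x~ - y| >= beta(rho) rho - R = d + K/s1 > 0.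
   3. Complex algebra: s^2 t^2 = (t s)^2 with Re(t s) = s1 t > 0, so the
      principal square root returns rho_s = t s exactly.  Hence
      |rho_s / s| = t >= d  and  Re rho_s = s1 t >= s1 d + K >= K. *)

Lemma Rint_is_RInt (f : R -> R) (a b l : R) : is_RInt f a b l -> Rint f a b = l.
Proof.
  intros H.
  assert (Hex : ex_RInt f a b) by (exists l; exact H).
  unfold Rint; destruct excluded_middle_informative as [Hi | Hn].
  - rewrite <- (RInt_Reals f a b). now apply is_RInt_unique.
  - exfalso; apply Hn; exists (ex_RInt_Reals_0 _ _ _ Hex); exact I.
Qed.

Lemma is_RInt_sigma_layer (R0 rho sigma0 : R) (m : nat) : R0 < rho ->
  is_RInt (sigma R0 rho sigma0 m) R0 rho (sigma0 * (rho - R0) / (INR m + 1)).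
Proof.
  intros hRrho.
  set (d := rho - R0).
  assert (hd : 0 < d) by (unfold d; lra).
  assert (hm : 0 < INR m + 1) by (pose proof (pos_INR m); lra).
  apply is_RInt_ext with (f := fun r => sigma0 * ((r - R0) / d) ^ m).
  { intros r [h1 h2]. rewrite Rmin_left in h1 by lra. rewrite Rmax_right in h2 by lra.
    unfold sigma. destruct Rle_dec; [lra |]. destruct Rle_dec; [reflexivity | lra]. }
  set (F := fun r => sigma0 * d / (INR m + 1) * ((r - R0) / d) ^ S m).
  assert (HF : is_RInt (fun r => sigma0 * ((r - R0) / d) ^ m) R0 rho
                 (minus (F rho) (F R0))).
  { apply (is_RInt_derive (V := R_CompleteNormedModule) F).
    - intros r _. unfold F. auto_derive; [auto |].
      change (match m with 0%nat => 1 | S _ => INR m + 1 end) with (INR (S m)).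
      rewrite S_INR. unfold Rminus, Rdiv.
      set (q := (r + - R0) * / d). field. lra.
    - intros r _. apply (ex_derive_continuous (fun r : R => sigma0 * ((r - R0) / d) ^ m)).
      auto_derive. auto. }
  replace (sigma0 * d / (INR m + 1)) with (minus (F rho) (F R0)); [exact HF |].
  unfold F, minus, plus, opp; simpl. fold d.
  replace ((R0 - R0) / d) with 0 by (field; lra).
  replace (d / d) with 1 by (field; lra).
  rewrite pow1, Rmult_0_l. field. lra.
Qed.

Lemma is_RInt_sigma_interior (R0 rho sigma0 : R) (m : nat) : 0 <= R0 ->
  is_RInt (sigma R0 rho sigma0 m) 0 R0 0.
Proof.
  intros hR.
  apply is_RInt_ext with (f := fun _ => 0).
  { intros r [_ h2]. rewrite Rmax_right in h2 by lra.
    unfold sigma. destruct Rle_dec; [reflexivity | lra]. }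
  replace 0 with (scal (R0 - 0) (0 : R)) at 2 by (unfold scal; simpl; unfold mult; simpl; ring).
  apply (is_RInt_const (V := R_NormedModule)).
Qed.

Lemma is_RInt_alpha (R0 rho sigma0 s1 : R) (m : nat) : 0 <= R0 -> R0 < rho ->
  is_RInt (alpha R0 rho sigma0 s1 m) 0 rho
    (rho + / s1 * (sigma0 * (rho - R0) / (INR m + 1))).
Proof.
  intros hR hRrho.
  set (K := sigma0 * (rho - R0) / (INR m + 1)).
  assert (Hsig : is_RInt (sigma R0 rho sigma0 m) 0 rho K).
  { replace K with (plus 0 K) by (unfold plus; simpl; ring).
    apply (is_RInt_Chasles (V := R_NormedModule) _ 0 R0 rho).
    - exact (is_RInt_sigma_interior R0 rho sigma0 m hR).
    - exact (is_RInt_sigma_layer R0 rho sigma0 m hRrho). }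
  replace (rho + / s1 * K) with (plus (scal (rho - 0) 1) (scal (/ s1) K))
    by (unfold plus, scal; simpl; unfold mult; simpl; ring).
  apply (is_RInt_plus (V := R_NormedModule)).
  - apply (is_RInt_const (V := R_NormedModule)).
  - exact (is_RInt_scal (V := R_NormedModule) _ 0 rho (/ s1) K Hsig).
Qed.

Lemma cauchy_schwarz3 (a b c p q r : R) :
  a * p + b * q + c * r <= sqrt ((a * a + b * b + c * c) * (p * p + q * q + r * r)).
Proof.
  destruct (Rle_or_lt (a * p + b * q + c * r) 0) as [Hneg | Hpos].
  - pose proof (sqrt_pos ((a * a + b * b + c * c) * (p * p + q * q + r * r))); lra.
  - rewrite <- (sqrt_square (a * p + b * q + c * r)) by lra.
    apply sqrt_le_1_alt.
    (* Lagrange's identity *)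
    assert (0 <= (a * q - b * p) ^ 2 + (a * r - c * p) ^ 2 + (b * r - c * q) ^ 2)
      by (apply Rplus_le_le_0_compat; [apply Rplus_le_le_0_compat |]; apply pow2_ge_0).
    nra.
Qed.

Lemma vnorm_sub_ge (x y : vec3) : vnorm x - vnorm y <= vnorm (vsub x y).
Proof.
  destruct x as [[a b] c], y as [[p q] r]; unfold vnorm, vsub.
  set (A := a * a + b * b + c * c).
  set (B := p * p + q * q + r * r).
  set (D := (a - p) * (a - p) + (b - q) * (b - q) + (c - r) * (c - r)).
  assert (hB : 0 <= B) by (unfold B; pose proof (Rle_0_sqr p);
    pose proof (Rle_0_sqr q); pose proof (Rle_0_sqr r); unfold Rsqr in *; lra).
  assert (hD : 0 <= D) by (unfold D; pose proof (Rle_0_sqr (a - p));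
    pose proof (Rle_0_sqr (b - q)); pose proof (Rle_0_sqr (c - r)); unfold Rsqr in *; lra).
  assert (Hcs : (a - p) * p + (b - q) * q + (c - r) * r <= sqrt D * sqrt B)
    by (rewrite <- sqrt_mult by assumption; apply cauchy_schwarz3).
  assert (Hsq : A <= (sqrt D + sqrt B) * (sqrt D + sqrt B)).
  { replace ((sqrt D + sqrt B) * (sqrt D + sqrt B))
      with (sqrt D * sqrt D + sqrt B * sqrt B + 2 * (sqrt D * sqrt B)) by ring.
    rewrite !sqrt_sqrt by assumption. unfold A, B, D in *. nra. }
  apply sqrt_le_1_alt in Hsq.
  rewrite sqrt_square in Hsq by (pose proof (sqrt_pos D); pose proof (sqrt_pos B); lra).
  lra.
Qed.

Lemma vnorm_vscale (t : R) (x : vec3) : 0 <= t -> vnorm (vscale t x) = t * vnorm x.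
Proof.
  intros ht. destruct x as [[a b] c]; unfold vnorm, vscale.
  replace (t * a * (t * a) + t * b * (t * b) + t * c * (t * c))
    with ((t * t) * (a * a + b * b + c * c)) by ring.
  rewrite sqrt_mult by nra. now rewrite sqrt_square.
Qed.

Lemma stretch_dist_ge (R0 rho sigma0 s1 : R) (m : nat) (x y : vec3) :
  0 <= beta R0 rho sigma0 s1 m rho -> vnorm x = rho -> vnorm y = R0 ->
  beta R0 rho sigma0 s1 m rho * rho - R0
    <= vnorm (vsub (stretch R0 rho sigma0 s1 m x) y).
Proof.
  intros hb hx hy.
  pose proof (vnorm_sub_ge (stretch R0 rho sigma0 s1 m x) y) as H.
  unfold stretch in *. rewrite hx in *.
  rewrite vnorm_vscale, hx, hy in H by exact hb. exact H.
Qed.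

Lemma Csqrt_square (w : C) : 0 < fst w -> Csqrt (Cmul w w) = w.
Proof.
  destruct w as [a b]; simpl; intros ha.
  unfold Csqrt, Cabs, Cmul; simpl.
  replace (sqrt ((a * a - b * b) * (a * a - b * b) + (a * b + b * a) * (a * b + b * a)))
    with (a * a + b * b)
    by (rewrite <- (sqrt_square (a * a + b * b)) by nra; f_equal; ring).
  replace ((a * a + b * b + (a * a - b * b)) / 2) with (a * a) by field.
  replace ((a * a + b * b - (a * a - b * b)) / 2) with (b * b) by field.
  rewrite sqrt_square by lra.
  f_equal. destruct Rlt_dec as [Hneg | Hnn].
  - assert (b < 0) by nra.
    replace (b * b) with (- b * - b) by ring. rewrite sqrt_square by lra. ring.
  - assert (0 <= b) by nra. rewrite sqrt_square by lra. ring.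
Qed.

Lemma Csqrt_scaled_square (s1 s2 t : R) : 0 < s1 -> 0 < t ->
  Csqrt (Cmul (Cmul (s1, s2) (s1, s2)) (RtoC (t * t))) = (t * s1, t * s2).
Proof.
  intros hs1 ht.
  replace (Cmul (Cmul (s1, s2) (s1, s2)) (RtoC (t * t)))
    with (Cmul (t * s1, t * s2) (t * s1, t * s2))
    by (unfold Cmul, RtoC; simpl; f_equal; ring).
  apply Csqrt_square; simpl; nra.
Qed.

Lemma Cdiv_scaled (s1 s2 t : R) : 0 < s1 -> Cdiv (t * s1, t * s2) (s1, s2) = RtoC t.
Proof.
  intros hs1. assert (hn : s1 * s1 + s2 * s2 <> 0) by nra.
  unfold Cdiv, Cmul, Cinv, RtoC; simpl. f_equal; field; exact hn.
Qed.

Lemma Cabs_RtoC (t : R) : 0 <= t -> Cabs (RtoC t) = t.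
Proof.
  intros ht. unfold Cabs, RtoC; simpl.
  replace (t * t + 0 * 0) with (t * t) by ring. now apply sqrt_square.
Qed.

Theorem lemma4p2 (R0 rho s1 s2 sigma0 : R) (m : nat)
  (hR : 0 < R0) (hRrho : R0 < rho) (hs1 : 0 < s1) (hsig : 0 < sigma0)
  (hm : (1 <= m)%nat) :
  forall x y : vec3, vnorm x = rho -> vnorm y = R0 ->
    Cabs (Cdiv (rho_s R0 rho sigma0 s1 m (s1, s2) x y) (s1, s2)) >= rho - R0 /\
    Re (rho_s R0 rho sigma0 s1 m (s1, s2) x y) >= rho * sigma_hat R0 rho sigma0 m rho /\
    rho * sigma_hat R0 rho sigma0 m rho = sigma0 * (rho - R0) / (INR m + 1).
Proof.
  intros x y hx hy.
  set (K := sigma0 * (rho - R0) / (INR m + 1)).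
  assert (hK : 0 <= K) by (unfold K; pose proof (pos_INR m);
                           apply Rle_mult_inv_pos; nra).
  assert (hKs : 0 <= / s1 * K) by (pose proof (Rinv_0_lt_compat s1 hs1); nra).
  assert (Hsh : rho * sigma_hat R0 rho sigma0 m rho = K).
  { unfold sigma_hat. rewrite (Rint_is_RInt _ _ _ _ (is_RInt_sigma_layer _ _ _ m hRrho)).
    fold K. field. lra. }
  assert (Hbeta : beta R0 rho sigma0 s1 m rho * rho = rho + / s1 * K).
  { unfold beta. rewrite (Rint_is_RInt _ _ _ _ (is_RInt_alpha _ _ _ s1 m (Rlt_le _ _ hR) hRrho)).
    fold K. field. lra. }
  set (t := vnorm (vsub (stretch R0 rho sigma0 s1 m x) y)).
  assert (Ht : rho - R0 + / s1 * K <= t).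
  { assert (hb : 0 <= beta R0 rho sigma0 s1 m rho) by nra.
    pose proof (stretch_dist_ge R0 rho sigma0 s1 m x y hb hx hy) as Hdist.
    fold t in Hdist. lra. }
  assert (Hrho_s : rho_s R0 rho sigma0 s1 m (s1, s2) x y = (t * s1, t * s2)).
  { apply Csqrt_scaled_square; [exact hs1 | lra]. }
  rewrite Hsh, Hrho_s, Cdiv_scaled, Cabs_RtoC by (exact hs1 || lra).
  unfold Re; simpl. split; [lra | split; [| reflexivity]].
  assert (Hs1t : s1 * (rho - R0 + / s1 * K) <= s1 * t)
    by (apply Rmult_le_compat_l; lra).
  replace (s1 * (rho - R0 + / s1 * K)) with (s1 * (rho - R0) + K) in Hs1t
    by (field; lra).
  nra.
Qed.
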